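(* Let $Y$, $X$ be real random variables and $\boldsymbol{Z}=(Z_1,\ldots,Z_{k_z})^T$ a random $k_z$-vector, with finite second moments and known joint distribution, satisfying $$Y=X\beta+\boldsymbol{Z}^T\boldsymbol{\gamma}+U,\qquad \operatorname{cov}(\boldsymbol{Z},U)=\boldsymbol{\alpha},$$ where $\beta\in\mathbb{R}$ is unknown, $\boldsymbol{\gamma},\boldsymbol{\alpha}\in\mathbb{R}^{k_z}$ are unknown and $U$ is an unobserved random variable. Assume: (1) (relevance) $\operatorname{cov}(\boldsymbol{Z},X)\neq\boldsymbol{0}$; (2) (sufficient variation) $\boldsymbol{\Sigma}_z:=\operatorname{var}(\boldsymbol{Z})$ is invertible; (3) (invalid instruments) $\gamma_\ell\alpha_\ell=0$ for every $\ell\in\{1,\ldots,k_z\}$; (4) (general partial exogeneity and exclusion) there are known constants $\tilde\delta_j\geq 0$, $j=1,\ldots,s_{k_z}$, such that $\left|(\operatorname{var}(\tilde Z_j))^{-1}\operatorname{cov}(\tilde Z_j,\tilde U)\right|\leq\tilde\delta_j$ for all $j$, where $\tilde U:=Y-X\beta=\boldsymbol{Z}^T\boldsymbol{\gamma}+U$ and $\tilde Z_j$ are the transformed instruments defined in the context. Then: (i) The falsification adaptive set is $$FAS=\left[\min_{j\in\tilde{\mathcal{L}}_{rel}}\frac{\tilde\psi_j}{\tilde\pi_j},\ \max_{j\in\tilde{\mathcal{L}}_{rel}}\frac{\tilde\psi_j}{\tilde\pi_j}\right],$$ where $\tilde{\mathcal{L}}_{rel}=\{j\in\{1,\ldots,s_{k_z}\}:\tilde\pi_j\neq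 0\}$ and $s_{k_z}=k_z2^{k_z-1}$ is the number of all just-identified IV model specifications. (ii) If there is at least one instrument that is relevant and valid, then $\beta\in FAS$, so that $FAS$ is the identified set for $\beta$.
   Context: Transformed just-identifying instruments: for $\ell\in\{1,\ldots,k_z\}$ let $A_{-\ell}=\{1,\ldots,k_z\}\setminus\{\ell\}$ and let $C$ range over all $2^{k_z-1}$ subsets of $A_{-\ell}$ (including $\emptyset$ and $A_{-\ell}$). Define the population linear projection error $Z_{\ell|C}:=Z_\ell-\boldsymbol{Z}_C^T\boldsymbol{\phi}_{C\ell}$, where $\boldsymbol{\phi}_{C\ell}=(\operatorname{var}(\boldsymbol{Z}_C))^{-1}\operatorname{cov}(\boldsymbol{Z}_C,Z_\ell)$ (with $Z_{\ell|\emptyset}=Z_\ell$); it is the just-identifying instrument in the specification where $\boldsymbol{Z}_C$ are included as controls and $\boldsymbol{Z}_{A_{-\ell}\setminus C}$ are omitted. Enumerating all pairs $(\ell,C)$ gives $s_{k_z}=k_z2^{k_z-1}$ variables $\tilde Z_1,\ldots,\tilde Z_{s_{k_z}}$. Set $\tilde\pi_j=(\operatorname{var}(\tilde Z_j))^{-1}\operatorname{cov}(\tilde Z_j,X)$ and $\tilde\psi_j=(\operatorname{var}(\tilde Z_j))^{-1}\operatorname{cov}(\tilde Z_j,Y)$; $\tilde Z_j$ is called relevant if $\tilde\pi_j\neq0$. Identified set: for $\tilde{\boldsymbol{\delta}}\in\mathbb{R}^{s_{k_z}}_{\geq0}$, $\mathcal{B}(\tilde{\boldsymbol{\delta}})=\{b\in\mathbb{R}:-\tilde{\boldsymbol{\delta}}\leq\tilde{\boldsymbol{\psi}}-\tilde{\boldsymbol{\pi}}b\leq\tilde{\boldsymbol{\delta}}\}$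 (componentwise). The falsification frontier $FF$ is the set of $\tilde{\boldsymbol{\delta}}\geq0$ with $\mathcal{B}(\tilde{\boldsymbol{\delta}})\neq\emptyset$ but $\mathcal{B}(\tilde{\boldsymbol{\delta}}')=\emptyset$ for every $\tilde{\boldsymbol{\delta}}'<\tilde{\boldsymbol{\delta}}$, where $\tilde{\boldsymbol{\delta}}'<\tilde{\boldsymbol{\delta}}$ means $\tilde\delta'_j\leq\tilde\delta_j$ for all $j$ with strict inequality for some $j$. The falsification adaptive set is $FAS=\bigcup_{\tilde{\boldsymbol{\delta}}\in FF}\mathcal{B}(\tilde{\boldsymbol{\delta}})$. An instrument $Z_\ell$ is valid if $\alpha_\ell=\gamma_\ell=0$. A valid instrument $Z_\ell$ is relevant here if its associated transformed just-identifying instrument $Z_{\ell|C}$, with $C=\{r\neq\ell:\gamma_r\neq0\}$ (the instruments violating exclusion included as controls and those violating exogeneity omitted), satisfies $\operatorname{cov}(Z_{\ell|C},X)\neq 0$. *)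

From HB Require Import structures.
From mathcomp Require Import all_boot all_order all_algebra.
From mathcomp Require Import all_classical all_reals all_analysis.
Set Implicit Arguments. Unset Strict Implicit. Unset Printing Implicit Defensive.
Import Order.TTheory GRing.Theory Num.Theory.
Local Open Scope classical_set_scope.
Local Open Scope ring_scope.

Section IVDefs.
Context {d : measure_display} {T : measurableType d} {R : realType}
  (P : probability T R).

(* real-valued covariance (finite under finite second moments) *)
Definition cov (A B : T -> R) : R := fine (covariance P A B).
Definition var (A : T -> R) : R := cov A A.

Context {k : nat} (Z : 'I_k -> T -> R).

Definition SigmaZ : 'M[R]_k := \matrix_(i, j) cov (Z i) (Z j).
Definition covZ (A : T -> R) : 'cV[R]_k := \col_i cov (Z i) A.

Definition varZC (C : {set 'I_k}) : 'M[R]_#|C| :=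
  \matrix_(i, j) cov (Z (enum_val i)) (Z (enum_val j)).
Definition covZC (C : {set 'I_k}) (l : 'I_k) : 'cV[R]_#|C| :=
  \col_i cov (Z (enum_val i)) (Z l).
Definition phiC (C : {set 'I_k}) (l : 'I_k) : 'cV[R]_#|C| :=
  invmx (varZC C) *m covZC C l.

Definition Zproj (l : 'I_k) (C : {set 'I_k}) : T -> R :=
  fun w => Z l w - \sum_(i < #|C|) Z (enum_val i) w * phiC C l i 0.

(* index set of the s_{k_z} = k_z 2^(k_z-1) just-identified specifications:
   pairs (l, C) with C a subset of {1..k_z} \ {l} *)
Definition spec_index := {p : 'I_k * {set 'I_k} | p.1 \notin p.2}.

Definition Ztilde (j : spec_index) : T -> R := Zproj (sval j).1 (sval j).2.

Definition pitilde (X : T -> R) (j : spec_index) : R :=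
  (var (Ztilde j))^-1 * cov (Ztilde j) X.
Definition psitilde (Y : T -> R) (j : spec_index) : R :=
  (var (Ztilde j))^-1 * cov (Ztilde j) Y.

Definition Bset (X Y : T -> R) (delta : spec_index -> R) : set R :=
  [set b | forall j, - delta j <= psitilde Y j - pitilde X j * b <= delta j].

Definition vlt (d1 d2 : spec_index -> R) : Prop :=
  (forall j, d1 j <= d2 j) /\ (exists j, d1 j < d2 j).

Definition FF (X Y : T -> R) : set (spec_index -> R) :=
  [set delta | (forall j, 0 <= delta j) /\ Bset X Y delta !=set0 /\
     (forall delta', (forall j, 0 <= delta' j) -> vlt delta' delta ->
        Bset X Y delta' = set0)].

Definition FAS (X Y : T -> R) : set R :=
  \bigcup_(delta in FF X Y) Bset X Y delta.

End IVDefs.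

(* Write g(b)_j = |psi_j - pi_j b|.  Then b lies in B(delta) iff g(b) <= delta,
   so the falsification frontier consists of the vectors g(b) that are not
   dominated by any g(b'), and the FAS is the set of such Pareto-optimal b.
   For a relevant j, g(b)_j = |pi_j| |psi_j/pi_j - b|, while the irrelevant
   coordinates do not depend on b.  Moving b towards all the ratios psi_j/pi_j
   therefore improves g(b) weakly in every coordinate, and strictly in the
   coordinate of the ratio it reaches: b is undominated exactly when it lies
   between the smallest and the largest ratio.
   For (ii), take C the instruments violating exclusion.  The covariance matrix
   of Z_C is a principal submatrix of Sigma_z, hence invertible, so the residual
   Z_{l|C} is uncorrelated with Z_C, hence with Z' gamma; it is uncorrelated
   with U because Z_l and Z_C satisfy exogeneity.  Thus
   cov(Z_{l|C}, Y) = beta cov(Z_{l|C}, X), and the ratio of this specification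
   is beta. *)

From HB Require Import structures.
From mathcomp Require Import all_boot all_order all_algebra.
From mathcomp Require Import all_classical all_reals all_analysis.
From mathcomp Require Import lra.
Set Implicit Arguments.
Unset Strict Implicit.
Unset Printing Implicit Defensive.

Import Order.TTheory GRing.Theory Num.Theory.
Local Open Scope classical_set_scope.
Local Open Scope ring_scope.

Section FalsificationAdaptiveSet.
Variables (R : realType) (J : finType) (p q : J -> R).

Definition ident_set (delta : J -> R) : set R :=
  [set b | forall j, - delta j <= q j - p j * b <= delta j].

Definition vec_lt (d1 d2 : J -> R) : Prop :=
  (forall j, d1 j <= d2 j) /\ (exists j, d1 j < d2 j).

Definition frontier : set (J -> R) :=
  [set delta | (forall j, 0 <= delta j) /\ ident_set delta !=set0 /\
     (forall delta', (forall j, 0 <= delta' j) -> vec_lt delta' delta ->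
        ident_set delta' = set0)].

Definition fas : set R := \bigcup_(delta in frontier) ident_set delta.

Definition gap (b : R) (j : J) : R := `|q j - p j * b|.

Definition ratio (j : J) : R := q j / p j.

Lemma ident_setE delta b : ident_set delta b <-> forall j, gap b j <= delta j.
Proof. by split=> H j; [rewrite /gap ler_norml | rewrite -ler_norml]; apply: H. Qed.

Lemma ident_set_gap b : ident_set (gap b) b.
Proof. exact/ident_setE. Qed.

Lemma gap_ge0 b j : 0 <= gap b j.
Proof. exact: normr_ge0. Qed.

Lemma ident_set_gap_neq0 b : ident_set (gap b) <> set0.
Proof. by move/seteqP=> [/(_ b (ident_set_gap b))]. Qed.

Lemma frontier_gap delta b : frontier delta -> ident_set delta b -> delta = gap b.
Proof.
case=> _ [_ minimal] /ident_setE gap_le; apply/funext => j.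
apply/eqP; rewrite eq_le gap_le andbT leNgt; apply/negP => gap_lt.
exact: ident_set_gap_neq0 (minimal _ (gap_ge0 b) (conj gap_le (ex_intro _ j gap_lt))).
Qed.

Lemma fasE b : fas b <-> ~ exists b', vec_lt (gap b') (gap b).
Proof.
split.
  case=> delta FFdelta /(frontier_gap FFdelta) def_delta [b' lt_b'].
  case: FFdelta => _ [_ /(_ _ (gap_ge0 b'))].
  by rewrite def_delta => /(_ lt_b'); exact: ident_set_gap_neq0.
move=> pareto; exists (gap b); last exact: ident_set_gap.
split; first exact: gap_ge0.
split; first by exists b; exact: ident_set_gap.
move=> delta' _ [le_delta' [j lt_delta']]; apply/seteqP; split=> // b'.
move/ident_setE => gap_le; apply: pareto; exists b'; split.
  by move=> i; exact: le_trans (gap_le i) (le_delta' i).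
by exists j; exact: le_lt_trans (gap_le j) lt_delta'.
Qed.

Lemma gapE b j : p j != 0 -> gap b j = `|p j| * `|ratio j - b|.
Proof. by move=> pj; rewrite -normrM mulrBr mulrC divfK. Qed.

Lemma gap_irrelevant b b' j : p j = 0 -> gap b' j = gap b j.
Proof. by move=> pj; rewrite /gap pj !mul0r. Qed.

Lemma gap_le_closer b b' :
  (forall j, p j != 0 -> `|ratio j - b'| <= `|ratio j - b|) ->
  forall j, gap b' j <= gap b j.
Proof.
move=> closer j; have [pj|pj] := eqVneq (p j) 0.
  by rewrite (gap_irrelevant b).
by rewrite !gapE // ler_pM2l ?normr_gt0 // closer.
Qed.

Section ExtremeRatios.
Variables jmin jmax : J.
Hypotheses (pmin : p jmin != 0) (pmax : p jmax != 0).
Hypothesis ratio_bounds : forall j, p j != 0 -> ratio jmin <= ratio j <= ratio jmax.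

Lemma fas_itv : fas = [set` `[ratio jmin, ratio jmax]].
Proof.
apply/seteqP; split=> b; rewrite /= in_itv /=.
  move/fasE => pareto; apply/andP; split; rewrite leNgt; apply/negP => out.
  - apply: pareto; exists (ratio jmin); split.
      apply: gap_le_closer => j /ratio_bounds /andP[lej _].
      by rewrite !ger0_norm ?subr_ge0 //; [lra | exact: le_trans (ltW out) lej].
    exists jmin; rewrite !gapE // subrr normr0 mulr0.
    by rewrite mulr_gt0 ?normr_gt0 ?subr_eq0 ?(gt_eqF out).
  - apply: pareto; exists (ratio jmax); split.
      apply: gap_le_closer => j /ratio_bounds /andP[_ lej].
      by rewrite !ler0_norm ?subr_le0 //; [lra | exact: le_trans lej (ltW out)].
    exists jmax; rewrite !gapE // subrr normr0 mulr0.
    by rewrite mulr_gt0 ?normr_gt0 ?subr_eq0 ?(lt_eqF out).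
case/andP=> minb bmax; apply/fasE => -[b' [gap_le [j gap_lt]]].
have [ltb'|ltbb'|eqb'] := ltgtP b' b.
- move: (gap_le jmax); rewrite !gapE // ler_pM2l ?normr_gt0 //.
  by rewrite !ger0_norm ?subr_ge0 //; [lra | exact: le_trans (ltW ltb') bmax].
- move: (gap_le jmin); rewrite !gapE // ler_pM2l ?normr_gt0 //.
  by rewrite !ler0_norm ?subr_le0 //; [lra | exact: le_trans minb (ltW ltbb')].
- by move: gap_lt; rewrite eqb' ltxx.
Qed.

End ExtremeRatios.

Lemma fas_extreme_ratios : (exists j, p j != 0) ->
  exists jmin jmax, p jmin != 0 /\ p jmax != 0 /\
    (forall j, p j != 0 -> ratio jmin <= ratio j <= ratio jmax) /\
    fas = [set` `[ratio jmin, ratio jmax]].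
Proof.
case=> j0 pj0.
have [jmin pmin minP] := @arg_minP _ _ _ j0 (fun j => p j != 0) ratio pj0.
have [jmax pmax maxP] := @arg_maxP _ _ _ j0 (fun j => p j != 0) ratio pj0.
have bounds j : p j != 0 -> ratio jmin <= ratio j <= ratio jmax.
  by move=> pj; apply/andP; split; [exact: minP | exact: maxP].
by exists jmin, jmax; do 3!split=> //; exact: fas_itv.
Qed.

End FalsificationAdaptiveSet.

Section L2Covariance.
Context d (T : measurableType d) (R : realType) (P : probability T R).
Local Notation L2 := (Lfun P 2%:E).

Lemma L2D (A B : T -> R) : A \in L2 -> B \in L2 -> (A \+ B)%R \in L2.
Proof. by move=> ? ?; apply: rpredD => //; rewrite lee1n. Qed.

Lemma L2B (A B : T -> R) : A \in L2 -> B \in L2 -> (A \- B)%R \in L2.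
Proof. by move=> ? ?; apply: rpredB => //; rewrite lee1n. Qed.

Lemma L2Z a (A : T -> R) : A \in L2 -> (a \o* A)%R \in L2.
Proof. by move=> ?; apply: Lfun_scale => //; rewrite ler1n. Qed.

Lemma L2_L1 (A : T -> R) : A \in L2 -> A \in Lfun P 1%E.
Proof. by apply: Lfun_subset12; rewrite fin_num_measure. Qed.

Lemma L2_mul_L1 (A B : T -> R) : A \in L2 -> B \in L2 -> (A * B)%R \in Lfun P 1%E.
Proof. exact: Lfun2_mul_Lfun1. Qed.

Lemma covariance_L2_fin_num (A B : T -> R) : A \in L2 -> B \in L2 ->
  covariance P A B \is a fin_num.
Proof.
by move=> A2 B2; apply: covariance_fin_num; [exact: L2_L1 | exact: L2_L1 |
  exact: L2_mul_L1].
Qed.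

Lemma covC (A B : T -> R) : cov P A B = cov P B A.
Proof. by rewrite /cov covarianceC. Qed.

Lemma cov_cst_l c (B : T -> R) : cov P (cst c) B = 0.
Proof. by rewrite /cov covariance_cst_l. Qed.

Lemma covDl (A B C : T -> R) : A \in L2 -> B \in L2 -> C \in L2 ->
  cov P (A \+ B)%R C = cov P A C + cov P B C.
Proof.
by move=> A2 B2 C2; rewrite /cov covarianceDl // fineD // covariance_L2_fin_num.
Qed.

Lemma covBl (A B C : T -> R) : A \in L2 -> B \in L2 -> C \in L2 ->
  cov P (A \- B)%R C = cov P A C - cov P B C.
Proof.
by move=> A2 B2 C2; rewrite /cov covarianceBl // fineB // covariance_L2_fin_num.
Qed.

Lemma covZl a (A B : T -> R) : A \in L2 -> B \in L2 ->
  cov P (a \o* A)%R B = a * cov P A B.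
Proof.
move=> A2 B2; have := (L2_L1 A2, L2_L1 B2, L2_mul_L1 A2 B2) => -[[A1 B1] AB1].
by rewrite /cov covarianceZl // fineM ?covariance_L2_fin_num.
Qed.

Lemma covDr (A B C : T -> R) : A \in L2 -> B \in L2 -> C \in L2 ->
  cov P A (B \+ C)%R = cov P A B + cov P A C.
Proof. by move=> A2 B2 C2; rewrite covC covDl // !(covC _ A). Qed.

Lemma covZr a (A B : T -> R) : A \in L2 -> B \in L2 ->
  cov P A (a \o* B)%R = a * cov P A B.
Proof. by move=> A2 B2; rewrite covC covZl // covC. Qed.

(* [covariance_le] bounds cov(A, B) only from above; apply it to A and to -A. *)
Lemma var0_cov0 (A B : T -> R) : A \in L2 -> B \in L2 -> var P A = 0 ->
  cov P A B = 0.
Proof.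
move=> A2 B2 vA0.
have VA0 : 'V_P[A] = 0%E by rewrite -(fineK (variance_fin_num A2)) [fine _]vA0.
have NA2 : (\- A)%R \in L2 by rewrite rpredN.
have le0 := covariance_le A2 B2.
have ge0 := covariance_le NA2 B2.
rewrite VA0 sqrte0 mul0e in le0.
have := (L2_L1 A2, L2_L1 B2, L2_mul_L1 A2 B2) => -[[A1 B1] AB1].
rewrite varianceN // VA0 sqrte0 mul0e covarianceNl // oppe_le0 in ge0.
by rewrite /cov (@le_anti _ _ (covariance P A B) 0%E) ?le0.
Qed.

Lemma cov_neq0_var (A B : T -> R) : A \in L2 -> B \in L2 -> cov P A B != 0 ->
  var P A != 0.
Proof. by move=> A2 B2; apply: contraNneq => /(var0_cov0 A2 B2) ->. Qed.

Definition lincomb n (F : 'I_n -> T -> R) (c : 'I_n -> R) : T -> R :=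
  fun x => \sum_i F i x * c i.

Lemma lincombS n (F : 'I_n.+1 -> T -> R) c :
  lincomb F c = (c ord0 \o* F ord0 \+ lincomb (F \o lift ord0) (c \o lift ord0))%R.
Proof. by apply/funext => x; rewrite /lincomb /= big_ord_recl [_ * c ord0]mulrC. Qed.

Lemma lincomb_L2 n (F : 'I_n -> T -> R) c : (forall i, F i \in L2) ->
  lincomb F c \in L2.
Proof.
elim: n F c => [|n IH] F c F2.
  rewrite (_ : lincomb F c = cst 0) ?Lfun_cst //.
  by apply/funext => x; rewrite /lincomb big_ord0.
have F2' i : (F \o lift ord0) i \in L2 by exact: F2.
by rewrite lincombS L2D ?L2Z ?IH.
Qed.

Lemma cov_lincomb_l n (F : 'I_n -> T -> R) c B : (forall i, F i \in L2) ->
  B \in L2 -> cov P (lincomb F c) B = \sum_i c i * cov P (F i) B.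
Proof.
elim: n F c => [|n IH] F c F2 B2.
  rewrite big_ord0 (_ : lincomb F c = cst 0) ?cov_cst_l //.
  by apply/funext => x; rewrite /lincomb big_ord0.
have F2' i : (F \o lift ord0) i \in L2 by exact: F2.
by rewrite lincombS covDl ?L2Z ?lincomb_L2 // covZl // IH // big_ord_recl.
Qed.

Lemma cov_lincomb_r n (F : 'I_n -> T -> R) c A : (forall i, F i \in L2) ->
  A \in L2 -> cov P A (lincomb F c) = \sum_i c i * cov P A (F i).
Proof.
by move=> F2 A2; rewrite covC cov_lincomb_l //; apply: eq_bigr => i _; rewrite covC.
Qed.

End L2Covariance.

Section LeastSquares.
Context d (T : measurableType d) (R : realType) (P : probability T R).
Local Notation L2 := (Lfun P 2%:E).
Variables (n : nat) (F : 'I_n -> T -> R).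
Hypothesis F2 : forall i, F i \in L2.

Definition gram : 'M[R]_n := \matrix_(i, j) cov P (F i) (F j).

Lemma mulmx_gram (v : 'rV_n) j : (v *m gram) 0 j = cov P (lincomb F (v 0)) (F j).
Proof. by rewrite mxE cov_lincomb_l //; apply: eq_bigr => i _; rewrite mxE. Qed.

Lemma gram_ker_cov0 (v : 'rV_n) B : v *m gram = 0 -> B \in L2 ->
  cov P (lincomb F (v 0)) B = 0.
Proof.
move=> vG0 B2; apply: var0_cov0 => //; first exact: lincomb_L2.
rewrite /var cov_lincomb_r ?lincomb_L2 //; apply: big1 => i _.
by rewrite -mulmx_gram vG0 mxE mulr0.
Qed.

Definition proj_coef (A : T -> R) : 'cV[R]_n :=
  invmx gram *m \col_i cov P (F i) A.

Definition resid (A : T -> R) : T -> R :=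
  (A \- lincomb F (fun i => proj_coef A i 0))%R.

Lemma resid_L2 A : A \in L2 -> resid A \in L2.
Proof. by move=> A2; rewrite L2B ?lincomb_L2. Qed.

Lemma cov_resid_l A B : A \in L2 -> B \in L2 ->
  cov P (resid A) B = cov P A B - \sum_i proj_coef A i 0 * cov P (F i) B.
Proof. by move=> A2 B2; rewrite covBl ?lincomb_L2 // cov_lincomb_l. Qed.

Lemma cov_resid_orth A i : gram \in unitmx -> A \in L2 -> cov P (resid A) (F i) = 0.
Proof.
move=> G_unit A2; rewrite cov_resid_l //.
have -> : \sum_j proj_coef A j 0 * cov P (F j) (F i) = (gram *m proj_coef A) i 0.
  by rewrite [RHS]mxE; apply: eq_bigr => j _; rewrite [gram i j]mxE mulrC covC.
by rewrite mulKVmx // mxE covC subrr.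
Qed.

End LeastSquares.

(* A left kernel vector of the Gram matrix of [F \o h], pushed forward along
   [h], is a left kernel vector of the Gram matrix of [F]. *)
Lemma gram_unit_comp d (T : measurableType d) (R : realType) (P : probability T R)
    m n (F : 'I_n -> T -> R) (h : 'I_m -> 'I_n) :
  (forall i, F i \in Lfun P 2%:E) -> injective h ->
  gram P F \in unitmx -> gram P (F \o h) \in unitmx.
Proof.
move=> F2 h_inj G_unit; rewrite unitmxE unitfE; apply/negP => /det0P[v v_neq0 vG0].
pose w : 'rV_n := \row_j \sum_(i | h i == j) v 0 i.
have lincomb_w : lincomb F (w 0) = lincomb (F \o h) (v 0).
  apply/funext => x; rewrite /lincomb [RHS](partition_big h predT) //=.
  apply: eq_bigr => j _; rewrite mxE mulr_sumr.
  by apply: eq_bigr => i /eqP <-.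
have wG0 : w *m gram P F = 0.
  apply/rowP => j; rewrite mulmx_gram // lincomb_w mxE.
  by apply: (gram_ker_cov0 _ vG0) => [i|]; exact: F2.
have w0 : w = 0 by rewrite -[w](mulmxK G_unit) wG0 mul0mx.
move/negP: v_neq0; apply; apply/eqP/rowP => i.
have := congr1 (fun u : 'rV_n => u 0 (h i)) w0; rewrite !mxE => <-.
by rewrite (big_pred1 i) // => i'; exact: inj_eq.
Qed.

Section JustIdentifiedInstruments.
Context d (T : measurableType d) (R : realType) (P : probability T R).
Local Notation L2 := (Lfun P 2%:E).
Variables (k : nat) (Z : 'I_k -> T -> R) (X : T -> R).
Hypotheses (Z2 : forall l, Z l \in L2) (X2 : X \in L2).

Lemma Zproj_resid l C :
  Zproj P Z l C = resid P (fun i : 'I_#|C| => Z (enum_val i)) (Z l).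
Proof. by []. Qed.

Lemma FAS_fas Y : FAS P Z X Y = fas (pitilde P Z X) (psitilde P Z Y).
Proof. by []. Qed.

Lemma Zproj_set0 l : Zproj P Z l finset.set0 = Z l.
Proof.
apply/funext => x; rewrite /Zproj big1 ?subr0 // => i.
by have := enum_valP i; rewrite inE.
Qed.

Lemma Zproj_L2 l C : Zproj P Z l C \in L2.
Proof. by rewrite Zproj_resid resid_L2. Qed.

Lemma cov_Zproj_orth l (C : {set 'I_k}) r : SigmaZ P Z \in unitmx -> r \in C ->
  cov P (Zproj P Z l C) (Z r) = 0.
Proof.
move=> Sigma_unit rC; rewrite Zproj_resid -(enum_rankK_in rC rC).
apply: cov_resid_orth => //.
exact: (gram_unit_comp Z2 enum_val_inj Sigma_unit).
Qed.

Lemma cov_Zproj_lincomb l (C : {set 'I_k}) gamma : SigmaZ P Z \in unitmx ->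
  (forall r, gamma r != 0 -> r \in C) -> cov P (Zproj P Z l C) (lincomb Z gamma) = 0.
Proof.
move=> Sigma_unit supp; rewrite cov_lincomb_r ?Zproj_L2 //; apply: big1 => r _.
have [->|gamma_r] := eqVneq (gamma r) 0; first by rewrite mul0r.
by rewrite cov_Zproj_orth ?mulr0 ?supp.
Qed.

Lemma cov_Zproj_exogenous l (C : {set 'I_k}) U : U \in L2 ->
  cov P (Z l) U = 0 -> (forall r, r \in C -> cov P (Z r) U = 0) ->
  cov P (Zproj P Z l C) U = 0.
Proof.
move=> U2 lU CU; rewrite Zproj_resid cov_resid_l // lU sub0r big1 ?oppr0 // => i _.
by rewrite CU ?mulr0 // enum_valP.
Qed.

Lemma pitilde_neq0 j : cov P (Ztilde P Z j) X != 0 -> pitilde P Z X j != 0.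
Proof.
move=> covX; apply: mulf_neq0 => //; rewrite invr_eq0.
exact: cov_neq0_var (Zproj_L2 _ _) X2 covX.
Qed.

Lemma relevant_spec_exists : covZ P Z X != 0 -> exists j, pitilde P Z X j != 0.
Proof.
move=> relevance; have [l covX] : exists l, cov P (Z l) X != 0.
  apply/existsP; apply: contraNT relevance; rewrite negb_exists => /forallP all0.
  by apply/eqP/colP => i; rewrite !mxE; exact/eqP/negbNE/all0.
have l_notin : l \notin (finset.set0 : {set 'I_k}) by rewrite inE.
exists (exist _ (l, finset.set0) l_notin); apply: pitilde_neq0.
by rewrite /Ztilde /= Zproj_set0.
Qed.

End JustIdentifiedInstruments.

Section LinearIVModel.
Context d (T : measurableType d) (R : realType) (P : probability T R).
Local Notation L2 := (Lfun P 2%:E).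
Variables (k : nat) (Z : 'I_k -> T -> R) (Y X U : T -> R).
Variables (beta : R) (gamma alpha : 'I_k -> R).
Hypotheses (Z2 : forall l, Z l \in L2) (X2 : X \in L2) (U2 : U \in L2).
Hypothesis model : forall w, Y w = X w * beta + \sum_(l < k) Z l w * gamma l + U w.
Hypothesis covZU : forall l, cov P (Z l) U = alpha l.
Hypothesis Sigma_unit : SigmaZ P Z \in unitmx.
Hypothesis invalid : forall l, gamma l * alpha l = 0.

Let C : {set 'I_k} := [set r | gamma r != 0]%SET.

Lemma cov_Zproj_Y l : alpha l = 0 ->
  cov P (Zproj P Z l C) Y = beta * cov P (Zproj P Z l C) X.
Proof.
move=> alpha_l.
have -> : Y = (beta \o* X \+ lincomb Z gamma \+ U)%R.
  by apply/funext => w; rewrite model /= mulrC.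
have W2 := Zproj_L2 Z2 l C.
have supp r : gamma r != 0 -> r \in C by rewrite inE.
have C_exo r : r \in C -> cov P (Z r) U = 0.
  rewrite inE covZU => /negbTE gamma_r; apply/eqP.
  by have /eqP := invalid r; rewrite mulf_eq0 gamma_r.
rewrite !covDr // ?L2D ?L2Z ?lincomb_L2 // covZr // cov_Zproj_lincomb //.
by rewrite [cov P _ U]cov_Zproj_exogenous ?covZU ?addr0.
Qed.

Lemma valid_instrument_ratio l : alpha l = 0 -> gamma l = 0 ->
  cov P (Zproj P Z l C) X != 0 ->
  exists j, pitilde P Z X j != 0 /\ psitilde P Z Y j / pitilde P Z X j = beta.
Proof.
move=> alpha_l gamma_l covX.
have l_notin : l \notin C by rewrite inE gamma_l eqxx.
pose j : spec_index := exist _ (l, C) l_notin.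
have pj : pitilde P Z X j != 0 by exact: pitilde_neq0.
exists j; split=> //.
by rewrite /psitilde /Ztilde /= cov_Zproj_Y // mulrCA mulfK.
Qed.

End LinearIVModel.

Theorem proposition1 (d : measure_display) (T : measurableType d) (R : realType)
  (P : probability T R) (k : nat)
  (Y X U : T -> R) (Z : 'I_k -> T -> R)
  (beta : R) (gamma alpha : 'I_k -> R) (deltat : @spec_index k -> R) :
  Y \in Lfun P 2%:E -> X \in Lfun P 2%:E -> U \in Lfun P 2%:E ->
  (forall l, Z l \in Lfun P 2%:E) ->
  (* model *)
  (forall w, Y w = X w * beta + \sum_(l < k) Z l w * gamma l + U w) ->
  (forall l, cov P (Z l) U = alpha l) ->
  (* (1) relevance *)
  covZ P Z X != 0 ->
  (* (2) sufficient variation *)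
  SigmaZ P Z \in unitmx ->
  (* (3) invalid instruments *)
  (forall l, gamma l * alpha l = 0) ->
  (* (4) general partial exogeneity and exclusion *)
  (forall j, 0 <= deltat j) ->
  (forall j, `|(var P (Ztilde P Z j))^-1 *
               cov P (Ztilde P Z j) (fun w => Y w - X w * beta)| <= deltat j) ->
  (* (i) FAS = [min_{j in Lrel} psi_j/pi_j, max_{j in Lrel} psi_j/pi_j] *)
  (exists jmin jmax : @spec_index k,
      pitilde P Z X jmin != 0 /\ pitilde P Z X jmax != 0 /\
      (forall j, pitilde P Z X j != 0 ->
         psitilde P Z Y jmin / pitilde P Z X jmin
           <= psitilde P Z Y j / pitilde P Z X j
           <= psitilde P Z Y jmax / pitilde P Z X jmax) /\
      FAS P Z X Y = [set` `[psitilde P Z Y jmin / pitilde P Z X jmin,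
                      psitilde P Z Y jmax / pitilde P Z X jmax]]) /\
  (* (ii) a relevant valid instrument implies beta \in FAS *)
  ((exists l : 'I_k, alpha l = 0 /\ gamma l = 0 /\
      cov P (Zproj P Z l [set r | gamma r != 0]) X != 0) ->
   FAS P Z X Y beta).
Proof.
move=> _ X2 U2 Z2 model covZU relevance Sigma_unit invalid _ _.
have [jmin [jmax [pmin [pmax [bounds fas_eq]]]]] :=
  fas_extreme_ratios (psitilde P Z Y) (relevant_spec_exists Z2 X2 relevance).
rewrite FAS_fas; split; first by exists jmin, jmax.
case=> l [alpha_l [gamma_l covX]].
have [j [pj <-]] := valid_instrument_ratio Z2 X2 U2 model covZU Sigma_unit invalid
  alpha_l gamma_l covX.
by rewrite fas_eq /= in_itv /= bounds.
Qed.
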